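(* Consider the delayed online learning protocol of the context. Assume the maximum delay is bounded by $\tau$ (i.e. $\{1,\dots,t-\tau-1\}\subset\mathcal S_t$ for all $t$), that $\|g_t\|_*\le G$ for all $t$, and that whenever $s\in\mathcal S_t$ one has $|\mathcal S_s|<|\mathcal S_t|$. Let DDA be run with \[\eta_t=\frac{r}{G\sqrt{(1+2\tau)(|\mathcal S_t|+\tau+1)}}.\] Then for every $p\in\mathcal X$ with $h(p)\le r^2$, \[R_T(p)\le 2rG\sqrt{(T+\tau)(1+2\tau)}.\]
   Context: Let $\mathcal V$ be a finite-dimensional real vector space with norm $\|\cdot\|$ and dual norm $\|\cdot\|_*$, and $\mathcal X\subset\mathcal V$ closed convex. A regularizer $h:\mathcal V\to\mathbb R\cup\{+\infty\}$ is lower semicontinuous, $1$-strongly convex w.r.t. $\|\cdot\|$ on $\mathcal X$, with $\mathcal X\subset\operatorname{dom}h$, whose subdifferential admits a continuous selection, and $h\ge0$. Protocol: at each round $t=1,\dots,T$ one agent $i(t)$ (among possibly many) is active, plays $x_t\in\mathcal X$, incurs $f_t(x_t)$ ($f_t$ convex, $\mathcal X\subset\operatorname{dom}\partial f_t$); a subgradient $g_t\in\partial f_t(x_t)$ is revealed later. $\mathcal S^i_t\subset\{1,\dots,t-1\}$: timestamps of subgradients available to (used by) agent $i$ at time $t$, nondecreasing in $t$; $\mathcal S_t=\mathcal S^{i(t)}_t$. DDA: $x_t=\arg\min_{x\in\mathcal X}\{\sum_{s\in\mathcal S_t}\langle g_s,x\rangle+h(x)/\eta_t\}$. Regret: $R_T(p)=\sum_tf_t(x_t)-\sum_tf_t(p)$.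 *)

From HB Require Import structures.
From mathcomp Require Import all_boot all_order all_algebra.
From mathcomp Require Import all_classical all_reals all_analysis.
Set Implicit Arguments. Unset Strict Implicit. Unset Printing Implicit Defensive.
Import Order.TTheory GRing.Theory Num.Theory.
Import numFieldNormedType.Exports.
Local Open Scope classical_set_scope.
Local Open Scope ring_scope.

(* The finite-dimensional real vector space V is 'rV[R]_n; its dual is
   identified with V through the standard pairing <g, x>. *)
Definition dot (R : realType) (n : nat) (g x : 'rV[R]_n) : R :=
  \sum_(i < n) g 0 i * x 0 i.

Definition is_norm (R : realType) (n : nat) (N : 'rV[R]_n -> R) : Prop :=
  [/\ forall x, N x = 0 -> x = 0,
      forall (a : R) x, N (a *: x) = `|a| * N x
    & forall x y, N (x + y) <= N x + N y].

Definition dual_norm (R : realType) (n : nat) (N : 'rV[R]_n -> R)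
  (g : 'rV[R]_n) : R := sup [set dot g x | x in [set x | N x <= 1]].

Definition dom (R : realType) (n : nat) (f : 'rV[R]_n -> \bar R) : set 'rV[R]_n :=
  [set x | f x \is a fin_num].

Definition subgrad (R : realType) (n : nat) (f : 'rV[R]_n -> \bar R)
  (x g : 'rV[R]_n) : Prop :=
  f x \is a fin_num /\ forall y, ((fine (f x) + dot g (y - x))%:E <= f y)%E.

Definition dom_subdiff (R : realType) (n : nat) (f : 'rV[R]_n -> \bar R)
  : set 'rV[R]_n := [set x | exists g, subgrad f x g].

Definition convex_ext (R : realType) (n : nat) (f : 'rV[R]_n -> \bar R) : Prop :=
  (forall x, f x != -oo%E) /\
  forall (x y : 'rV[R]_n) (l : R), 0 < l < 1 ->
    (f (l *: x + (1 - l) *: y)%R <= l%:E * f x + (1 - l)%R%:E * f y)%E.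

Definition strongly_convex_on (R : realType) (n : nat) (N : 'rV[R]_n -> R)
  (X : set 'rV[R]_n) (h : 'rV[R]_n -> \bar R) : Prop :=
  forall (x y : 'rV[R]_n) (l : R), X x -> X y -> 0 < l < 1 ->
    (h (l *: x + (1 - l) *: y)%R + (l * (1 - l) / 2 * N (x - y) ^+ 2)%:E
       <= l%:E * h x + (1 - l)%R%:E * h y)%E.

Definition subdiff_cont_selection (R : realType) (n : nat)
  (h : 'rV[R]_n -> \bar R) : Prop :=
  exists sel : 'rV[R]_n -> 'rV[R]_n,
    (forall x, dom_subdiff h x -> subgrad h x (sel x)) /\
    {within dom_subdiff h, continuous sel}.

Definition cardS (S : pred nat) (t : nat) : nat := count S (iota 1 t.-1).

Definition sum_avail (R : realType) (n : nat) (S : pred nat) (t : nat)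
  (g : nat -> 'rV[R]_n) : 'rV[R]_n := \sum_(1 <= s < t | S s) g s.

Definition dda_obj (R : realType) (n : nat) (G : 'rV[R]_n) (eta : R)
  (h : 'rV[R]_n -> \bar R) (x : 'rV[R]_n) : \bar R :=
  ((dot G x)%:E + (eta^-1)%:E * h x)%E.

Definition is_argmin (R : realType) (n : nat) (X : set 'rV[R]_n)
  (F : 'rV[R]_n -> \bar R) (x : 'rV[R]_n) : Prop :=
  X x /\ forall y, X y -> (F x <= F y)%E.

Definition regret (R : realType) (n : nat) (f : nat -> 'rV[R]_n -> \bar R)
  (x : nat -> 'rV[R]_n) (T : nat) (p : 'rV[R]_n) : R :=
  \sum_(1 <= t < T.+1) (fine (f t (x t)) - fine (f t p)).

From HB Require Import structures.
From mathcomp Require Import all_boot all_order all_algebra.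
From mathcomp Require Import all_classical all_reals all_analysis.
From mathcomp Require Import ring lra zify.
Set Implicit Arguments. Unset Strict Implicit. Unset Printing Implicit Defensive.
Import Order.TTheory GRing.Theory Num.Theory.
Import numFieldNormedType.Exports.
Local Open Scope classical_set_scope.
Local Open Scope ring_scope.

(* Rank the rounds lexicographically by (|S_t|, t). Every subgradient available
   at round t comes from a round of smaller rank, and by the delay bound at most
   tau rounds of smaller rank are missing from S_t. Compare DDA with the leader
   that, at round t, has seen every subgradient of smaller rank: strong
   convexity of h shows that playing x_t instead costs at most
   eta_t G^2 (1/2 + tau), so an induction along the ranking bounds the
   linearised regret by h(p)/eta + (1/2 + tau) G^2 sum_t eta_t for any
   eta <= min_t eta_t. With the given step sizes and
   eta = r / (G sqrt((T + tau)(1 + 2 tau))) both terms are at most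
   r G sqrt((T + tau)(1 + 2 tau)). *)

Section Dot.
Variables (R : realType) (n : nat).
Implicit Types (g x y : 'rV[R]_n).

Lemma dotDl g g' x : dot (g + g') x = dot g x + dot g' x.
Proof. by rewrite /dot -big_split; apply: eq_bigr => i _; rewrite mxE mulrDl. Qed.

Lemma dot0l x : dot 0 x = 0.
Proof. by rewrite /dot big1 // => i _; rewrite mxE mul0r. Qed.

Lemma dot_suml (I : Type) (r : seq I) (P : pred I) (F : I -> 'rV[R]_n) x :
  dot (\sum_(i <- r | P i) F i) x = \sum_(i <- r | P i) dot (F i) x.
Proof.
rewrite /dot; under eq_bigr do rewrite summxE big_distrl /=.
exact: exchange_big.
Qed.

Lemma dotDr g x y : dot g (x + y) = dot g x + dot g y.
Proof. by rewrite /dot -big_split; apply: eq_bigr => i _; rewrite mxE mulrDr. Qed.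

Lemma dotBr g x y : dot g (x - y) = dot g x - dot g y.
Proof. by rewrite /dot -sumrB; apply: eq_bigr => i _; rewrite !mxE mulrBr. Qed.

Lemma dotZr g a x : dot g (a *: x) = a * dot g x.
Proof. by rewrite /dot mulr_sumr; apply: eq_bigr => i _; rewrite mxE mulrCA. Qed.

Lemma dot0r g : dot g 0 = 0.
Proof. by rewrite -(scale0r 0) dotZr mul0r. Qed.

Lemma coord_le_mx_norm x i : `|x 0 i| <= `|x|.
Proof.
have /mapP[j _ ->] : `|x 0 i| \in [seq `|x k.1 k.2| | k : 'I_1 * 'I_n].
  by apply/mapP; exists (0, i) => //=; rewrite mem_enum.
by rewrite [leRHS]/Num.Def.normr /= mx_normrE; apply/bigmax_geP; right; exists j.
Qed.

End Dot.

Section Norm.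
Variables (R : realType) (n : nat) (N : 'rV[R]_n -> R).
Hypothesis N_norm : is_norm N.
Implicit Types (g x y : 'rV[R]_n).

Lemma norm_eq0 x : N x = 0 -> x = 0.
Proof. by case: N_norm => /(_ x). Qed.

Lemma normZ a x : N (a *: x) = `|a| * N x.
Proof. by case: N_norm => _ /(_ a x). Qed.

Lemma normD x y : N (x + y) <= N x + N y.
Proof. by case: N_norm => _ _ /(_ x y). Qed.

Lemma norm0 : N 0 = 0.
Proof. by rewrite -(scale0r 0) normZ normr0 mul0r. Qed.

Lemma normN x : N (- x) = N x.
Proof. by rewrite -scaleN1r normZ normrN normr1 mul1r. Qed.

Lemma norm_ge0 x : 0 <= N x.
Proof. by have := normD x (- x); rewrite subrr norm0 normN; lra. Qed.

Lemma norm_sum_le (I : Type) (r : seq I) (P : pred I) (F : I -> 'rV[R]_n) :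
  N (\sum_(i <- r | P i) F i) <= \sum_(i <- r | P i) N (F i).
Proof.
elim/big_rec2: _ => [|i y1 y2 _ IH]; first by rewrite norm0.
by apply: le_trans (normD _ _) _; rewrite lerD2l.
Qed.

Lemma norm_le_mx_norm : exists2 C, 0 <= C & forall x, N x <= C * `|x|.
Proof.
exists (\sum_(i < n) N (delta_mx 0 i)); first by apply: sumr_ge0 => i _; apply: norm_ge0.
move=> x; rewrite {1}(row_sum_delta x) mulr_suml.
apply: le_trans (norm_sum_le _ _ _) _; apply: ler_sum => i _.
by rewrite normZ mulrC ler_wpM2l ?norm_ge0 ?coord_le_mx_norm.
Qed.

Lemma is_norm_continuous : continuous N.
Proof.
have [C C0 NC] := norm_le_mx_norm => x.
apply/(@cvgrPdist_lt _ _ _ (nbhs x)) => e e0.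
apply/nbhs_ballP; exists (e / (C + 1)) => [|y]; first by apply: divr_gt0 => //; lra.
rewrite -ball_normE /= => xy.
have : `|N x - N y| <= N (x - y).
  rewrite ler_norml; have := normD (x - y) y; have := normD (y - x) x.
  by rewrite !subrK -opprB normN; lra.
move/le_lt_trans; apply; apply: le_lt_trans (NC _) _.
rewrite ltr_pdivlMr in xy; last lra.
by apply: le_lt_trans xy; rewrite mulrC ler_wpM2l // lerDl.
Qed.

Lemma mx_norm_le_norm : exists2 c, 0 < c & forall x, c * `|x| <= N x.
Proof.
have [[x0 x0_neq0]|all0] := pselect (exists x0 : 'rV[R]_n, x0 != 0); last first.
  exists 1 => // x; have -> : x = 0 by apply/eqP/negPn/negP => x_neq0; apply: all0; exists x.
  by rewrite normr0 mulr0 norm0.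
pose A := [set x : 'rV[R]_n | `|x| = 1].
have normalized x : x != 0 -> A (`|x|^-1 *: x).
  by move=> x_neq0; rewrite /A /= normrZ normfV normr_id mulVf // normr_eq0.
have A_compact : compact A.
  apply: bounded_closed_compact; first by exists 1; split => // M M1 x /= ->; exact: ltW.
  change (closed ((@Num.Def.normr R 'rV[R]_n) @^-1` [set 1])).
  by apply: preimage_closed => // x _; exact: norm_continuous.
have [c /set_mem Ac c_min] := EVT_min_rV (ex_intro _ _ (normalized _ x0_neq0)) A_compact
  (continuous_subspaceT is_norm_continuous).
have Nc_gt0 : 0 < N c.
  rewrite lt0r norm_ge0 andbT; apply/eqP => /norm_eq0 c0.
  by move: Ac; rewrite /A /= c0 normr0 => /eqP; rewrite eq_sym oner_eq0.
exists (N c) => // x; have [->|x_neq0] := eqVneq x 0; first by rewrite normr0 mulr0 norm0.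
have := c_min _ (mem_set (normalized _ x_neq0)).
rewrite normZ normfV normr_id.
by rewrite ler_pdivlMl ?normr_gt0 // mulrC.
Qed.

Lemma dot_le_dual_norm g v : dot g v <= dual_norm N g * N v.
Proof.
have [c c_gt0 cN] := mx_norm_le_norm.
pose E := [set dot g x | x in [set x | N x <= 1]].
(* [sup] of a set that is not bounded above is 0, so [dual_norm] is only
   meaningful because the unit ball of N is bounded in the max-norm. *)
have E_sup : has_sup E.
  split; first by exists (dot g 0), 0 => //=; rewrite norm0.
  exists ((\sum_(i < n) `|g 0 i|) / c) => _ [x /= Nx1 <-].
  apply: le_trans (ler_norm _) _; apply: le_trans (ler_norm_sum _ _ _) _.
  rewrite ler_pdivlMr //; apply: le_trans (_ : _ <= (\sum_(i < n) `|g 0 i|) * `|x| * c) _.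
    apply: ler_wpM2r; first exact: ltW.
    rewrite mulr_suml; apply: ler_sum => i _.
    by rewrite normrM ler_wpM2l ?coord_le_mx_norm.
  rewrite -mulrA ler_piMr ?sumr_ge0 // mulrC.
  exact: le_trans (cN x) Nx1.
have [Nv0|Nv_neq0] := eqVneq (N v) 0.
  by rewrite (norm_eq0 Nv0) dot0r norm0 mulr0.
have Nv_gt0 : 0 < N v by rewrite lt0r Nv_neq0 norm_ge0.
have : E (dot g ((N v)^-1 *: v)).
  by exists ((N v)^-1 *: v) => //=; rewrite normZ normfV gtr0_norm ?mulVf.
move=> /(sup_upper_bound E_sup); rewrite dotZr.
by rewrite mulrC -ler_pdivrMr // mulrC.
Qed.

Lemma dot_le_of_dual_norm_le g G : dual_norm N g <= G -> forall v, dot g v <= G * N v.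
Proof. by move=> gG v; apply: le_trans (dot_le_dual_norm g v) _; rewrite ler_wpM2r ?norm_ge0. Qed.

End Norm.

Lemma ler_of_forall_1Bl_mul (R : realFieldType) (D E : R) :
  (forall l, 0 < l < 1 -> (1 - l) * D <= E) -> D <= E.
Proof.
move=> DE; apply/ler_addgt0Pr => e e_gt0.
have D_ge0 := normr_ge0 D.
pose l := e / (e + `|D| + 1).
have l_gt0 : 0 < l by apply: divr_gt0 => //; lra.
have l_lt1 : l < 1 by rewrite ltr_pdivrMr ?mul1r; lra.
have lD : l * D <= e.
  apply: le_trans (ler_norm _) _; rewrite normrM gtr0_norm // mulrAC ler_pdivrMr; last lra.
  by rewrite ler_wpM2l ?ltW //; lra.
have /DE : 0 < l < 1 by rewrite l_gt0 l_lt1.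
lra.
Qed.

Section DDAObjective.
Variables (R : realType) (n : nat) (N : 'rV[R]_n -> R).
Variables (X : set 'rV[R]_n) (h : 'rV[R]_n -> \bar R).
Hypotheses (N_norm : is_norm N) (X_convex : convex_set X).
Hypotheses (h_sc : strongly_convex_on N X h) (X_dom : X `<=` dom h).
Implicit Types (a y z w : 'rV[R]_n).

Definition dda_objr a (eta : R) y : R := dot a y + fine (h y) / eta.

Lemma fine_hK y : X y -> (fine (h y))%:E = h y.
Proof. by move=> /X_dom; exact: fineK. Qed.

Lemma dda_objE a eta y : X y -> dda_obj a eta h y = (dda_objr a eta y)%:E.
Proof.
by move=> Xy; rewrite /dda_obj -(fine_hK Xy) -EFinM -EFinD /dda_objr mulrC.
Qed.

Lemma is_argmin_dda_objr a eta xm : is_argmin X (dda_obj a eta h) xm ->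
  X xm /\ forall y, X y -> dda_objr a eta xm <= dda_objr a eta y.
Proof.
by move=> [Xxm xm_min]; split=> // y Xy; have := xm_min y Xy; rewrite !dda_objE.
Qed.

Lemma dda_objrDl a b eta y : dda_objr (a + b) eta y = dda_objr a eta y + dot b y.
Proof. by rewrite /dda_objr dotDl addrAC. Qed.

Lemma dda_objr_anti_step (h_ge0 : forall y, (0 <= h y)%E) a eta eta' y :
  0 < eta' -> eta' <= eta -> dda_objr a eta y <= dda_objr a eta' y.
Proof.
move=> eta'_gt0 eta'_le; rewrite lerD2l ler_wpM2l ?fine_ge0 //.
by rewrite lef_pV2 ?posrE //; exact: lt_le_trans eta'_le.
Qed.

Lemma convex_combination_in z w l : X z -> X w -> 0 <= l <= 1 ->
  X (l *: z + (1 - l) *: w).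
Proof.
move=> Xz Xw /andP[l_ge0 l_le1].
exact: set_mem (X_convex (Itv01 l_ge0 l_le1) (mem_set Xz) (mem_set Xw)).
Qed.

Lemma dda_objr_strongly_convex a eta z w l : 0 < eta -> X z -> X w -> 0 < l < 1 ->
  dda_objr a eta (l *: z + (1 - l) *: w) <=
    l * dda_objr a eta z + (1 - l) * dda_objr a eta w
    - l * (1 - l) * (N (z - w) ^+ 2 / (2 * eta)).
Proof.
move=> eta_gt0 Xz Xw l01; have /andP[l_gt0 l_lt1] := l01.
have Xzw : X (l *: z + (1 - l) *: w) by apply: convex_combination_in; rewrite ?ltW.
have := h_sc Xz Xw l01; rewrite -(fine_hK Xz) -(fine_hK Xw) -(fine_hK Xzw).
rewrite -EFinD -!EFinM -EFinD lee_fin => sc.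
rewrite /dda_objr dotDr !dotZr.
have : fine (h (l *: z + (1 - l) *: w)) / eta <=
    (l * fine (h z) + (1 - l) * fine (h w) - l * (1 - l) / 2 * N (z - w) ^+ 2) / eta.
  by rewrite ler_pM2r ?invr_gt0 //; lra.
have -> : (l * fine (h z) + (1 - l) * fine (h w) - l * (1 - l) / 2 * N (z - w) ^+ 2) / eta =
    l * (fine (h z) / eta) + (1 - l) * (fine (h w) / eta)
    - l * (1 - l) * (N (z - w) ^+ 2 / (2 * eta)).
  by field; rewrite gt_eqF.
lra.
Qed.

Lemma dda_objr_quadratic_growth a eta xm z : 0 < eta -> X xm -> X z ->
  (forall y, X y -> dda_objr a eta xm <= dda_objr a eta y) ->
  N (z - xm) ^+ 2 / (2 * eta) <= dda_objr a eta z - dda_objr a eta xm.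
Proof.
move=> eta_gt0 Xxm Xz xm_min; apply: ler_of_forall_1Bl_mul => l l01.
have /andP[l_gt0 l_lt1] := l01.
have := dda_objr_strongly_convex a eta_gt0 Xz Xxm l01.
have /xm_min : X (l *: z + (1 - l) *: xm) by apply: convex_combination_in; rewrite ?ltW.
move=> min sc; rewrite -(ler_pM2l l_gt0); lra.
Qed.

(* If z is within eta G of the minimiser xm, take y := xm; otherwise move from z
   towards xm by the fraction eta G / N (z - xm), so that the quadratic growth
   of the objective around xm pays for the linear terms. *)
Lemma dda_leader_step a b g eta G m xm z :
  0 < eta -> 0 < G -> 0 <= m -> is_argmin X (dda_obj a eta h) xm ->
  (forall v, dot g v <= G * N v) -> (forall v, dot b v <= G * m * N v) -> X z ->
  exists2 y, X y &
    dda_objr (a + b) eta y + dot g xm - eta * G ^+ 2 * (1/2 + m)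
      <= dda_objr (a + b + g) eta z.
Proof.
move=> eta_gt0 G_gt0 m_ge0 /is_argmin_dda_objr[Xxm xm_min] g_le b_le Xz.
set d := N (z - xm); have d_ge0 : 0 <= d := norm_ge0 N_norm _.
have growth := dda_objr_quadratic_growth eta_gt0 Xxm Xz xm_min; rewrite -/d in growth.
have g_d : dot g xm - dot g z <= G * d by rewrite -dotBr /d -opprB -(normN N_norm).
have b_d : dot b xm - dot b z <= G * m * d by rewrite -dotBr /d -opprB -(normN N_norm).
rewrite !dda_objrDl.
have [d_small|d_large] := leP d (eta * G).
  exists xm => //; rewrite dda_objrDl.
  have : G * d - eta * G ^+ 2 / 2 <= d ^+ 2 / (2 * eta).
    rewrite -subr_ge0 (_ : _ - _ = (d - eta * G) ^+ 2 / (2 * eta)).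
      by rewrite divr_ge0 ?sqr_ge0 //; lra.
    by field; rewrite gt_eqF.
  have := ler_wpM2l (mulr_ge0 (ltW G_gt0) m_ge0) d_small.
  lra.
pose mu := eta * G / d.
have d_gt0 : 0 < d by have := mulr_gt0 eta_gt0 G_gt0; lra.
have mu_gt0 : 0 < mu by rewrite divr_gt0 ?mulr_gt0.
have mu_lt1 : mu < 1 by rewrite ltr_pdivrMr ?mul1r.
have l01 : 0 < 1 - mu < 1 by apply/andP; lra.
exists ((1 - mu) *: z + (1 - (1 - mu)) *: xm).
  by apply: convex_combination_in => //; apply/andP; lra.
have := dda_objr_strongly_convex a eta_gt0 Xz Xxm l01; rewrite -/d.
rewrite dda_objrDl dotDr !dotZr.
have : mu * (d ^+ 2 / (2 * eta)) <= mu * (dda_objr a eta z - dda_objr a eta xm).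
  by rewrite ler_pM2l.
have : mu * (dot b xm - dot b z) <= eta * G ^+ 2 * m.
  have -> : eta * G ^+ 2 * m = mu * (G * m * d) by rewrite /mu; field; rewrite gt_eqF.
  by rewrite ler_pM2l.
have -> : (1 - mu) * (1 - (1 - mu)) * (d ^+ 2 / (2 * eta)) =
    G * d - eta * G ^+ 2 / 2 - mu * (d ^+ 2 / (2 * eta)).
  by rewrite /mu; field; rewrite !gt_eqF.
lra.
Qed.

End DDAObjective.

Section RankSums.
Variables (T : nat) (rank : nat -> nat).
Hypothesis rank_inj : forall s t, (1 <= s <= T)%N -> (1 <= t <= T)%N ->
  rank s = rank t -> s = t.
Variables (V : zmodType) (F : nat -> V).

Lemma sum_rank_ltS q :
  \sum_(1 <= s < T.+1 | (rank s < q.+1)%N) F s =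
  \sum_(1 <= s < T.+1 | (rank s < q)%N) F s + \sum_(1 <= s < T.+1 | rank s == q) F s.
Proof.
rewrite (bigID (fun s => (rank s < q)%N)) /=; congr (_ + _); apply: eq_bigl => s.
  by rewrite andb_idl // => /ltnW.
by rewrite ltnS -leqNgt -eqn_leq.
Qed.

Lemma sum_rank_eq j : (1 <= j <= T)%N ->
  \sum_(1 <= s < T.+1 | rank s == rank j) F s = F j.
Proof.
move=> j_round; rewrite (congr_big_nat 1 T.+1 (fun s => s == j) F) //.
  by rewrite big_nat1_eq ltnS j_round.
move=> s s_range; apply/eqP/eqP => [rank_sj|-> //].
by apply: rank_inj rank_sj; lia.
Qed.

Lemma sum_rank_eq0 q : ~ (exists2 j, (1 <= j <= T)%N & rank j = q) ->
  \sum_(1 <= s < T.+1 | rank s == q) F s = 0.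
Proof.
move=> no_j; apply: big1_seq => s /andP[/eqP rank_s].
by rewrite mem_index_iota ltnS => s_round; case: no_j; exists s.
Qed.

Lemma sum_rank_lt_max :
  \sum_(1 <= s < T.+1 | (rank s < (\max_(1 <= t < T.+1) rank t).+1)%N) F s =
  \sum_(1 <= s < T.+1) F s.
Proof.
apply: congr_big_nat => // s s_range.
by rewrite ltnS; apply: leq_bigmax_seq; rewrite ?mem_index_iota.
Qed.

End RankSums.

Section LeaderAlongRank.
Variables (R : realType) (n : nat) (N : 'rV[R]_n -> R).
Variables (X : set 'rV[R]_n) (h : 'rV[R]_n -> \bar R).
Hypotheses (N_norm : is_norm N) (X_convex : convex_set X).
Hypotheses (h_sc : strongly_convex_on N X h) (X_dom : X `<=` dom h).
Hypothesis h_ge0 : forall y, (0 <= h y)%E.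
Variables (T : nat) (rank : nat -> nat).
Hypothesis rank_inj : forall s t, (1 <= s <= T)%N -> (1 <= t <= T)%N ->
  rank s = rank t -> s = t.
Variables (a g x : nat -> 'rV[R]_n) (eta : nat -> R) (G m : R).

Definition rank_prefix_sum q := \sum_(1 <= s < T.+1 | (rank s < q)%N) g s.

Hypotheses (G_gt0 : 0 < G) (m_ge0 : 0 <= m) (eta_gt0 : forall t, 0 < eta t).
Hypothesis eta_rank_anti : forall s t, (1 <= s <= T)%N -> (1 <= t <= T)%N ->
  (rank s < rank t)%N -> eta t <= eta s.
Hypothesis g_le : forall t, (1 <= t <= T)%N -> forall v, dot (g t) v <= G * N v.
Hypothesis x_argmin : forall t, (1 <= t <= T)%N ->
  is_argmin X (dda_obj (a t) (eta t) h) (x t).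
Hypothesis lag_le : forall t, (1 <= t <= T)%N ->
  forall v, dot (rank_prefix_sum (rank t) - a t) v <= G * m * N v.

Lemma rank_prefix_bound q et y : 0 < et ->
  (forall s, (1 <= s <= T)%N -> (rank s < q)%N -> et <= eta s) -> X y ->
  \sum_(1 <= s < T.+1 | (rank s < q)%N) (dot (g s) (x s) - eta s * G ^+ 2 * (1/2 + m))
    <= dda_objr h (rank_prefix_sum q) et y.
Proof.
elim: q et y => [|q IH] et y et_gt0 et_le Xy.
  rewrite /rank_prefix_sum !big_pred0 // /dda_objr dot0l add0r.
  by apply: divr_ge0; [exact: fine_ge0 | exact: ltW].
rewrite /rank_prefix_sum !sum_rank_ltS -/(rank_prefix_sum q).
have [[j j_round rank_j]|no_j] := pselect (exists2 j, (1 <= j <= T)%N & rank j = q); last first.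
  rewrite !(sum_rank_eq0 _ no_j) !addr0; apply: IH => // s s_round lt_sq.
  by apply: et_le => //; exact: ltnW.
subst q; rewrite !sum_rank_eq //.
have [y' Xy' step] := dda_leader_step N_norm X_convex h_sc X_dom (eta_gt0 j) G_gt0
  m_ge0 (x_argmin j_round) (g_le j_round) (lag_le j_round) Xy.
rewrite subrKC in step.
have := IH (eta j) y' (eta_gt0 j) (fun s s_round => eta_rank_anti s_round j_round) Xy'.
have := dda_objr_anti_step h_ge0 (rank_prefix_sum (rank j) + g j) y et_gt0
  (et_le j j_round (ltnSn _)).
lra.
Qed.

Lemma leader_linear_regret et y : 0 < et ->
  (forall t, (1 <= t <= T)%N -> et <= eta t) -> X y ->
  \sum_(1 <= t < T.+1) (dot (g t) (x t) - dot (g t) y)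
    <= \sum_(1 <= t < T.+1) eta t * G ^+ 2 * (1/2 + m) + fine (h y) / et.
Proof.
move=> et_gt0 et_le Xy.
have := rank_prefix_bound (q := (\max_(1 <= t < T.+1) rank t).+1) et_gt0
  (fun s s_round _ => et_le s s_round) Xy.
by rewrite /rank_prefix_sum !sum_rank_lt_max /dda_objr dot_suml !sumrB; lra.
Qed.

End LeaderAlongRank.

Lemma sum_le_count (R : numDomainType) (I : eqType) (r : seq I) (P : pred I)
    (F : I -> R) c :
  (forall i, i \in r -> P i -> F i <= c) -> \sum_(i <- r | P i) F i <= (count P r)%:R * c.
Proof.
elim: r => [|i r IH] F_le; first by rewrite big_nil mul0r.
have {}IH := IH (fun j jr => F_le j (mem_behead (s := i :: r) jr)).
rewrite big_cons /=; case: ifP => Pi; last by rewrite add0n.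
by rewrite natrD mulrDl mul1r lerD // F_le ?mem_head.
Qed.

Lemma cardS_le (P : pred nat) t : (cardS P t <= t.-1)%N.
Proof. by rewrite /cardS (leq_trans (count_size _ _)) ?size_iota. Qed.

Lemma cardS_ge (P : pred nat) t c :
  (forall s, (1 <= s <= c)%N -> P s) -> (c <= t.-1)%N -> (c <= cardS P t)%N.
Proof.
move=> P_init c_le; rewrite /cardS -size_filter -[c in (c <= _)%N](size_iota 1).
apply: uniq_leq_size (iota_uniq _ _) _ => s.
rewrite mem_filter !mem_iota => /andP[s_ge1 s_lt].
by rewrite P_init ?s_ge1 //=; lia.
Qed.

Section DelayedRounds.
Variables (S : nat -> pred nat) (T tau : nat).
Hypothesis S_past : forall t s, S t s -> (0 < s < t)%N.
Hypothesis S_delay : forall t s, (1 <= t <= T)%N -> (1 <= s)%N ->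
  (s <= t - tau - 1)%N -> S t s.
Hypothesis S_card : forall t s, (1 <= t <= T)%N -> S t s ->
  (cardS (S s) s < cardS (S t) t)%N.

(* The lexicographic order on (|S_t|, t), encoded in nat since rounds are <= T. *)
Definition delay_rank t := (cardS (S t) t * T.+1 + t)%N.

Definition lagging t s := (delay_rank s < delay_rank t)%N && ~~ S t s.

Lemma cardS_delay t : (1 <= t <= T)%N -> (t - tau - 1 <= cardS (S t) t)%N.
Proof. by move=> t_round; apply: cardS_ge => [s /andP[]|]; [exact: S_delay | lia]. Qed.

Lemma delay_rank_ltE s t : (s <= T)%N -> (t <= T)%N ->
  (delay_rank s < delay_rank t)%N =
  (cardS (S s) s < cardS (S t) t)%N || (cardS (S s) s == cardS (S t) t) && (s < t)%N.
Proof.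
rewrite /delay_rank; set ks := cardS (S s) s; set kt := cardS (S t) t => s_le t_le.
case: (ltngtP ks kt) => [lt|gt|->] /=; last by rewrite ltn_add2l.
  have : (ks.+1 * T.+1 <= kt * T.+1)%N by rewrite leq_mul2r lt orbT.
  lia.
have : (kt.+1 * T.+1 <= ks * T.+1)%N by rewrite leq_mul2r gt orbT.
lia.
Qed.

Lemma delay_rank_inj s t : (1 <= s <= T)%N -> (1 <= t <= T)%N ->
  delay_rank s = delay_rank t -> s = t.
Proof.
have rank_mod u : (u <= T)%N -> (delay_rank u %% T.+1 = u)%N.
  by move=> u_le; rewrite /delay_rank modnMDl modn_small.
by move=> /andP[_ /rank_mod {2}<-] /andP[_ /rank_mod {2}<-] ->.
Qed.

Lemma delay_rank_lt_cardS s t : (1 <= s <= T)%N -> (1 <= t <= T)%N ->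
  (delay_rank s < delay_rank t)%N -> (cardS (S s) s <= cardS (S t) t)%N.
Proof.
move=> /andP[_ s_le] /andP[_ t_le]; rewrite delay_rank_ltE //.
by case/orP => [/ltnW|/andP[/eqP-> _]].
Qed.

Lemma avail_rank_lt t s : (1 <= t <= T)%N -> S t s -> (delay_rank s < delay_rank t)%N.
Proof.
move=> t_round Sts; have /andP[_ s_lt] := S_past Sts.
by rewrite delay_rank_ltE ?(S_card t_round Sts) //; lia.
Qed.

(* The rounds available at t and those lagging at t are disjoint and all lie in
   [1, |S_t| + tau], and there are |S_t| of the former. *)
Lemma count_lagging_le t : (1 <= t <= T)%N -> (count (lagging t) (iota 1 T) <= tau)%N.
Proof.
move=> t_round; set A := seq.filter (S t) (iota 1 t.-1).
set L := seq.filter (lagging t) (iota 1 T).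
have A_uniq : uniq (A ++ L).
  rewrite cat_uniq !filter_uniq ?iota_uniq // andbT.
  apply/hasPn => s; rewrite !mem_filter => /andP[/andP[_ nSts] _].
  by rewrite (negbTE nSts).
have A_sub : {subset A ++ L <= iota 1 (cardS (S t) t + tau)}.
  have := cardS_delay t_round.
  move=> kt_ge s; rewrite mem_cat !mem_filter !mem_iota => /orP[/andP[_]|].
    lia.
  move=> /andP[/andP[rank_lt _] s_range].
  have s_round : (1 <= s <= T)%N by lia.
  have := cardS_delay s_round.
  move: rank_lt; rewrite delay_rank_ltE; [|lia|lia].
  by case/orP => [|/andP[_ s_lt]]; lia.
have := uniq_leq_size A_uniq A_sub.
by rewrite size_cat !size_filter size_iota leq_add2l.
Qed.

Lemma rank_prefix_sum_avail (R : realType) n (g : nat -> 'rV[R]_n) t : (1 <= t <= T)%N ->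
  rank_prefix_sum T delay_rank g (delay_rank t) =
  sum_avail (S t) t g + \sum_(1 <= s < T.+1 | lagging t s) g s.
Proof.
move=> t_round; rewrite /rank_prefix_sum (bigID (S t)) /=; congr (_ + _).
rewrite /sum_avail [RHS](big_nat_widen _ _ T.+1); last by case/andP: t_round; lia.
apply: eq_bigl => s; case Sts: (S t s); rewrite ?andbF ?andbT //=.
by rewrite avail_rank_lt //; have := S_past Sts; lia.
Qed.

Lemma lag_dot_le (R : realType) n (N : 'rV[R]_n -> R) (g : nat -> 'rV[R]_n) G :
  is_norm N -> 0 <= G -> (forall s, (1 <= s <= T)%N -> forall v, dot (g s) v <= G * N v) ->
  forall t, (1 <= t <= T)%N -> forall v,
  dot (rank_prefix_sum T delay_rank g (delay_rank t) - sum_avail (S t) t g) v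
    <= G * tau%:R * N v.
Proof.
move=> N_norm G_ge0 g_le t t_round v.
rewrite rank_prefix_sum_avail // [sum_avail _ _ _ + _]addrC addrK dot_suml.
apply: le_trans (sum_le_count (c := G * N v) _) _ => [s|].
  by rewrite mem_index_iota ltnS => s_round _; exact: g_le.
have := count_lagging_le t_round; rewrite -(ler_nat R) /index_iota subSS subn0.
have := mulr_ge0 G_ge0 (norm_ge0 N_norm v).
nra.
Qed.

End DelayedRounds.

Lemma sum_inv_sqrt_le (R : rcfType) (T : nat) :
  \sum_(1 <= t < T.+1) (2 * Num.sqrt (t%:R : R))^-1 <= Num.sqrt T%:R.
Proof.
elim: T => [|T IH]; first by rewrite big_geq // sqrtr0.
rewrite big_nat_recr //=.
set a := Num.sqrt (T%:R : R); set b := Num.sqrt (T.+1%:R : R).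
have a_ge0 : 0 <= a by exact: sqrtr_ge0.
have b_gt0 : 0 < b by rewrite sqrtr_gt0 ltr0n.
have a_le_b : a <= b by rewrite ler_sqrt // ler_nat.
have a2 : a ^+ 2 = T%:R by rewrite sqr_sqrtr.
have b2 : b ^+ 2 = T%:R + 1 by rewrite sqr_sqrtr // -addn1 natrD.
have : (2 * b)^-1 <= b - a.
  by rewrite -[leLHS]mul1r ler_pdivrMr ?mulr_gt0 //; nra.
by move: IH; rewrite -/a; lra.
Qed.

Definition delay_step (R : rcfType) (r G : R) (tau c : nat) : R :=
  r / (G * Num.sqrt ((1 + 2 * tau)%:R * (c + tau + 1)%:R)).

Section DelayStep.
Variables (R : rcfType) (r G : R) (tau : nat).
Hypotheses (r_gt0 : 0 < r) (G_gt0 : 0 < G).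

Let denom_gt0 c : 0 < G * Num.sqrt ((1 + 2 * tau)%:R * (c + tau + 1)%:R : R).
Proof. by rewrite pmulr_rgt0 // sqrtr_gt0 -natrM ltr0n muln_gt0 addn1. Qed.

Lemma delay_step_gt0 c : 0 < delay_step r G tau c.
Proof. exact: divr_gt0. Qed.

Lemma delay_step_anti c c' : (c <= c')%N -> delay_step r G tau c' <= delay_step r G tau c.
Proof.
move=> le_cc'; rewrite ler_pM2l // lef_pV2 ?posrE // ler_pM2l // ler_sqrt ?ler0n //.
by rewrite -!natrM ler_nat leq_mul2l !leq_add2r le_cc' orbT.
Qed.

Lemma delay_step_cost c : delay_step r G tau c * G ^+ 2 * (1/2 + tau%:R) =
  r * G * Num.sqrt (1 + 2 * tau)%:R / (2 * Num.sqrt (c + tau + 1)%:R).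
Proof.
rewrite /delay_step sqrtrM ?ler0n //.
set a := Num.sqrt (1 + 2 * tau)%:R; set b := Num.sqrt (c + tau + 1)%:R.
have a_gt0 : 0 < a by rewrite sqrtr_gt0 ltr0n addn_gt0.
have b_gt0 : 0 < b by rewrite sqrtr_gt0 ltr0n addn1.
have -> : tau%:R = (a ^+ 2 - 1) / 2 :> R.
  by rewrite sqr_sqrtr ?ler0n // natrD natrM; field.
by field; rewrite !gt_eqF.
Qed.

Lemma sum_delay_step_cost_le T (c : nat -> nat) :
  (forall t, (1 <= t <= T)%N -> (t <= c t + tau + 1)%N) ->
  \sum_(1 <= t < T.+1) delay_step r G tau (c t) * G ^+ 2 * (1/2 + tau%:R)
    <= r * G * Num.sqrt ((T + tau)%:R * (1 + 2 * tau)%:R).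
Proof.
move=> c_ge; set K := r * G * Num.sqrt (1 + 2 * tau)%:R.
have K_ge0 : 0 <= K by rewrite !mulr_ge0 ?sqrtr_ge0 ?ltW.
apply: le_trans (_ : \sum_(1 <= t < T.+1) K * (2 * Num.sqrt t%:R)^-1 <= _).
  apply: ler_sum_nat => t /andP[t_ge1 t_lt]; rewrite delay_step_cost ler_wpM2l //.
  rewrite lef_pV2 ?posrE ?pmulr_rgt0 ?sqrtr_gt0 ?ltr0n ?addn1 // ler_pM2l //.
  by rewrite ler_sqrt ?ler0n // ler_nat -addn1 c_ge // t_ge1 -ltnS.
rewrite -mulr_sumr; apply: le_trans (ler_wpM2l K_ge0 (sum_inv_sqrt_le _ T)) _.
rewrite /K -[r * G * _ * _]mulrA; apply: ler_wpM2l; first by rewrite mulr_ge0 ?ltW.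
rewrite -sqrtrM ?ler0n // ler_sqrt ?ler0n //.
by rewrite -!natrM ler_nat mulnC leq_mul2r leq_addr orbT.
Qed.

Lemma div_delay_step_le T H : (0 < T)%N -> H <= r ^+ 2 ->
  H / delay_step r G tau T.-1 <= r * G * Num.sqrt ((T + tau)%:R * (1 + 2 * tau)%:R).
Proof.
move=> T_gt0 H_le; rewrite /delay_step invf_div (_ : (T.-1 + tau + 1 = T + tau)%N); last lia.
rewrite [X in Num.sqrt X]mulrC.
set s := Num.sqrt _; have s_ge0 : 0 <= s := sqrtr_ge0 _.
apply: le_trans (ler_wpM2r _ H_le) _.
  exact: divr_ge0 (mulr_ge0 (ltW G_gt0) s_ge0) (ltW r_gt0).
have -> : r ^+ 2 * (G * s / r) = r * G * s by field; rewrite gt_eqF.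
by [].
Qed.

End DelayStep.

Lemma regret_le_linearized (R : realType) n (f : nat -> 'rV[R]_n -> \bar R)
    (x g : nat -> 'rV[R]_n) T p :
  (forall t, (1 <= t <= T)%N -> subgrad (f t) (x t) (g t)) ->
  (forall t, (1 <= t <= T)%N -> dom_subdiff (f t) p) ->
  regret f x T p <= \sum_(1 <= t < T.+1) (dot (g t) (x t) - dot (g t) p).
Proof.
move=> g_sub p_sub; apply: ler_sum_nat => t /andP[t_ge1 t_lt].
have t_round : (1 <= t <= T)%N by rewrite t_ge1 -ltnS.
have [_ [fp_fin _]] := p_sub t t_round; have [_ /(_ p)] := g_sub t t_round.
by rewrite -(fineK fp_fin) lee_fin dotBr; lra.
Qed.

Theorem proposition4 (R : realType) (n : nat) (N : 'rV[R]_n -> R)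
  (X : set 'rV[R]_n) (h : 'rV[R]_n -> \bar R)
  (I : Type) (agent : nat -> I) (Sa : I -> nat -> pred nat)
  (f : nat -> 'rV[R]_n -> \bar R) (x g : nat -> 'rV[R]_n)
  (T tau : nat) (G r : R) (p : 'rV[R]_n) :
  is_norm N ->
  closed X -> convex_set X ->
  lower_semicontinuous h ->
  strongly_convex_on N X h ->
  X `<=` dom h ->
  subdiff_cont_selection h ->
  (forall y, (0 <= h y)%E) ->
  (* protocol: timestamps available to agent i at time t *)
  (forall i t s, Sa i t s -> (0 < s < t)%N) ->
  (forall i t t' s, (t <= t')%N -> Sa i t s -> Sa i t' s) ->
  let S t := Sa (agent t) t in
  (forall t, (1 <= t <= T)%N -> convex_ext (f t)) ->
  (forall t, (1 <= t <= T)%N -> X `<=` dom_subdiff (f t)) ->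
  (forall t, (1 <= t <= T)%N -> subgrad (f t) (x t) (g t)) ->
  (* bounded delay *)
  (forall t s, (1 <= t <= T)%N -> (1 <= s)%N -> (s <= t - tau - 1)%N -> S t s) ->
  (* bounded subgradients *)
  (forall t, (1 <= t <= T)%N -> dual_norm N (g t) <= G) ->
  (forall t s, (1 <= t <= T)%N -> S t s -> (cardS (S s) s < cardS (S t) t)%N) ->
  0 < r -> 0 < G ->
  let eta t := r / (G * Num.sqrt ((1 + 2 * tau)%:R * (cardS (S t) t + tau + 1)%:R)) in
  (* DDA *)
  (forall t, (1 <= t <= T)%N ->
     is_argmin X (dda_obj (sum_avail (S t) t g) (eta t) h) (x t)) ->
  X p -> (h p <= (r ^+ 2)%:E)%E ->
  regret f x T p <= 2 * r * G * Num.sqrt ((T + tau)%:R * (1 + 2 * tau)%:R).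
Proof.
(* Closedness of X, lower semicontinuity of h and the continuous selection only
   serve to make the DDA argmin exist, which is assumed here. *)
move=> N_norm _ X_convex _ h_sc X_dom _ h_ge0 Sa_past _ S _ f_sub g_sub S_delay
  g_dual S_card r_gt0 G_gt0 eta x_dda Xp hp.
have [->|T_gt0] := posnP T.
  by rewrite /regret big_geq // !mulr_ge0 ?sqrtr_ge0 ?ltW.
have S_past t s : S t s -> (0 < s < t)%N := Sa_past (agent t) t s.
have g_le t (t_round : (1 <= t <= T)%N) := dot_le_of_dual_norm_le N_norm (g_dual t t_round).
have eta_anti s t : (1 <= s <= T)%N -> (1 <= t <= T)%N ->
    (delay_rank S T s < delay_rank S T t)%N -> eta t <= eta s.
  by move=> s_round t_round /(delay_rank_lt_cardS s_round t_round); exact: delay_step_anti.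
have eta_gt0 t : 0 < eta t := delay_step_gt0 tau r_gt0 G_gt0 _.
have et_le t : (1 <= t <= T)%N -> delay_step r G tau T.-1 <= eta t.
  by move=> t_round; apply: delay_step_anti => //; apply: leq_trans (cardS_le _ _) _; lia.
have := leader_linear_regret N_norm X_convex h_sc X_dom h_ge0 (@delay_rank_inj S T)
  G_gt0 (ler0n R tau) eta_gt0 eta_anti g_le x_dda
  (lag_dot_le S_past S_delay S_card N_norm (ltW G_gt0) g_le)
  (delay_step_gt0 tau r_gt0 G_gt0 T.-1) et_le Xp.
have : \sum_(1 <= t < T.+1) eta t * G ^+ 2 * (1/2 + tau%:R)
    <= r * G * Num.sqrt ((T + tau)%:R * (1 + 2 * tau)%:R).
  by apply: sum_delay_step_cost_le => // t t_round; have := cardS_delay S_delay t_round; lia.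
have hp_le : fine (h p) <= r ^+ 2 by rewrite -lee_fin (fine_hK X_dom Xp).
have := div_delay_step_le tau r_gt0 G_gt0 T_gt0 hp_le.
have := regret_le_linearized g_sub (fun t t_round => f_sub t t_round p Xp).
lra.
Qed.
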